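(* Let $\mathcal D$ be a family of sets of literals all of whose elements are non-trivial, and let $x\in X$ be a variable such that $\mathcal D$ is $x$-orthogonal. Then $$\mathbf I_x\Big(\bigvee_{C\in\mathcal D}\bigwedge_{\eta\in C}\eta\Big)=2\cdot\mathbf{JW}_x(\mathcal D).$$
   Context: $X$ is a fixed finite set of variables; literals are elements of $X\cup\{\overline z:z\in X\}$ and are interpreted as the Boolean functions $\mathbf u\mapsto\mathbf u(z)$ resp. $1-\mathbf u(z)$ on $\{0,1\}^X$. A family of sets of literals is a set of subsets of $X\cup\{\overline z:z\in X\}$. A set of literals $C$ is trivial if $z\in C$ and $\overline z\in C$ for some variable $z$. $\mathcal D$ is $x$-orthogonal if for all $C\ne C'$ in $\mathcal D$ there is a literal $\eta\notin\{x,\overline x\}$ with $\eta\in C$ and $\overline\eta\in C'$ (where $\overline{\overline z}=z$). The two-sided Jeroslow–Wang value is $\mathbf{JW}_x(\mathcal D)=\sum_{C\in\mathcal D:\,x\in C\text{ or }\overline x\in C}2^{-|C|}$. The influence is $\mathbf I_x(f)=\mathbb E[f_{x/1}\oplus f_{x/0}]$, expectation under the uniform distribution on $\{0,1\}^X$, where $f_{x/c}$ is $f$ with $x$ fixed to $c$. *)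

From mathcomp Require Import all_boot all_order all_algebra.
Set Implicit Arguments. Unset Strict Implicit. Unset Printing Implicit Defensive.
Import Order.TTheory GRing.Theory Num.Theory.
Local Open Scope ring_scope.

(* A literal over variables X: (z, true) is z, (z, false) is overline z. *)
Definition lit (X : finType) := (X * bool)%type.
Definition negl (X : finType) (l : lit X) : lit X := (l.1, ~~ l.2).
Definition assign (X : finType) := {ffun X -> bool}.

Definition lit_val (X : finType) (l : lit X) (u : assign X) : bool :=
  if l.2 then u l.1 else ~~ u l.1.

Definition dnf (X : finType) (D : {set {set lit X}}) (u : assign X) : bool :=
  [exists C in D, [forall l in C, lit_val l u]].

Definition trivial_clause (X : finType) (C : {set lit X}) : bool :=
  [exists z : X, ((z, true) \in C) && ((z, false) \in C)].

Definition x_orthogonal (X : finType) (x : X) (D : {set {set lit X}}) : Prop :=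
  forall C C', C \in D -> C' \in D -> C != C' ->
    exists eta : lit X, [/\ eta.1 != x, eta \in C & negl eta \in C'].

Definition fix_var (X : finType) (x : X) (c : bool) (u : assign X) : assign X :=
  [ffun z => if z == x then c else u z].

Definition expect (X : finType) (g : assign X -> bool) : rat :=
  (\sum_(u : assign X) (g u)%:R) / (#|{: assign X}|)%:R.

Definition influence (X : finType) (x : X) (f : assign X -> bool) : rat :=
  expect (fun u => f (fix_var x true u) (+) f (fix_var x false u)).

Definition JW (X : finType) (x : X) (D : {set {set lit X}}) : rat :=
  \sum_(C in D | ((x, true) \in C) || ((x, false) \in C)) (2%:R ^- #|C|).

From mathcomp Require Import all_boot all_algebra.
Set Implicit Arguments. Unset Strict Implicit. Unset Printing Implicit Defensive.
Import GRing.Theory Num.Theory.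
Local Open Scope ring_scope.

(* For a clause C and a sign c, fixing x to c kills C when C
   contains the literal of x of sign ~~c, and otherwise turns C into its
   restriction C\x, the literals of C on variables other than x.  Under
   x-orthogonality a given assignment u satisfies the restriction of at most
   one clause of D; hence f_{x/1}(u) xor f_{x/0}(u) counts the clauses C
   mentioning x with u satisfying C\x (for a non-trivial C, exactly one of the
   two literals on x lies in C).  Taking expectations, which is linear, the
   influence is the sum over the clauses mentioning x of the probability
   that C\x is satisfied.  A non-trivial set of literals S is satisfied with
   probability 2^-|S|, because it fixes the values of exactly |S| variables;
   with |C\x| = |C| - 1 this yields 2 JW_x(D). *)

Section Clauses.
Variable X : finType.
Implicit Types (S C : {set lit X}) (u : assign X).

Definition clause_sat S u : bool := [forall l in S, lit_val l u].

Lemma lit_val_negl (l : lit X) u : lit_val (negl l) u = ~~ lit_val l u.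
Proof. by rewrite /lit_val /=; case: l.2; rewrite ?negbK. Qed.

Lemma nontrivial_opp S z b :
  ~~ trivial_clause S -> (z, b) \in S -> (z, ~~ b) \notin S.
Proof.
move=> nt zbS; apply: contra nt => zbS'; apply/existsP; exists z.
by case: b zbS zbS' => /= -> ->.
Qed.

Lemma nontrivial_var_inj S :
  ~~ trivial_clause S -> {in S &, injective (fun l : lit X => l.1)}.
Proof.
move=> nt [z b] [z' b'] zbS zbS' /= ezz; subst z'.
case: b b' zbS zbS' => [] [] // zbS zbS';
  by rewrite (negPf (nontrivial_opp nt zbS)) in zbS'.
Qed.

Lemma nontrivial_sub S C :
  S \subset C -> ~~ trivial_clause C -> ~~ trivial_clause S.
Proof.
move=> /subsetP sSC; apply: contra => /existsP [z /andP [zt zf]].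
by apply/existsP; exists z; rewrite !sSC.
Qed.

Definition vars S : {set X} := [set l.1 | l in S].

Lemma card_vars S : ~~ trivial_clause S -> #|vars S| = #|S|.
Proof. by move=> nt; rewrite card_in_imset //; apply: nontrivial_var_inj. Qed.

(* the values a satisfying assignment of S may take at each variable: the
   sign of its literal for a variable of S, anything otherwise *)
Definition forced_values S (z : X) : pred bool :=
  if z \in vars S then pred1 ((z, true) \in S) else predT.

Lemma clause_sat_family S :
  ~~ trivial_clause S ->
  [set u | clause_sat S u] = [set u in family (forced_values S)].
Proof.
move=> nt; apply/setP => u; rewrite !inE /forced_values.
apply/forallP/familyP => /= sat_u.
- move=> z; case: ifP => //= /imsetP [[z' b] zbS ->] /=.
  move: (sat_u (z', b)); rewrite zbS /lit_val /=.
  case: b zbS => zbS /=; first by rewrite zbS => ->.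
  by rewrite (negPf (nontrivial_opp nt zbS)) => /negPf ->.
- move=> [z b]; apply/implyP => zbS; move: (sat_u z).
  rewrite (_ : z \in vars S); last by apply/imsetP; exists (z, b).
  rewrite /lit_val /= => /eqP ->.
  by case: b zbS => zbS //; rewrite (negPf (nontrivial_opp nt zbS)).
Qed.

Lemma card_clause_sat S :
  ~~ trivial_clause S -> (#|[set u | clause_sat S u]| * 2 ^ #|S| = 2 ^ #|X|)%N.
Proof.
move=> nt; rewrite clause_sat_family // cardsE card_family foldrE big_map big_enum /=.
rewrite (bigID (mem (vars S))) /= big1 ?mul1n => [|z zS]; last first.
  by rewrite /forced_values zS card1.
rewrite (eq_bigr (fun=> 2%N)) => [|z /negPf zS]; last first.
  by rewrite /forced_values zS card_bool.
by rewrite -card_vars // prod_nat_const -expnD addnC cardC.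
Qed.

Lemma expect_sum (I : finType) (P : pred I) (f : assign X -> bool)
    (g : I -> assign X -> bool) :
  (forall u, (f u : nat) = \sum_(i | P i) (g i u : nat))%N ->
  expect f = \sum_(i | P i) expect (g i).
Proof.
move=> fg; rewrite /expect -mulr_suml exchange_big /=; congr (_ / _).
by apply: eq_bigr => u _; rewrite fg natr_sum.
Qed.

Lemma expect_clause_sat S :
  ~~ trivial_clause S -> expect (clause_sat S) = 2%:R ^- #|S|.
Proof.
move=> nt; have count_sat := card_clause_sat nt; rewrite /expect.
have -> : \sum_u (clause_sat S u : nat)%:R = #|[set u | clause_sat S u]|%:R :> rat.
  rewrite -natr_sum -sum1dep_card; congr _%:R.
  by rewrite [RHS]big_mkcond; apply: eq_bigr => u _; case: ifP.
have sat_pos : (0 < #|[set u | clause_sat S u]|)%N.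
  rewrite lt0n; apply/eqP => n0; move: count_sat.
  by rewrite n0 => /esym/eqP; rewrite expn_eq0.
rewrite /assign card_ffun card_bool -count_sat natrM natrX invfM mulrA mulfV //.
  by rewrite mul1r.
by rewrite pnatr_eq0 -lt0n.
Qed.

Variable x : X.

Definition restrict C : {set lit X} := [set l in C | l.1 != x].

Definition mentions C : bool := ((x, true) \in C) || ((x, false) \in C).

Lemma restrict_sub C : restrict C \subset C.
Proof. by apply/subsetP => l; rewrite inE => /andP []. Qed.

Lemma card_restrict C :
  ~~ trivial_clause C -> mentions C -> #|C| = (#|restrict C|).+1.
Proof.
move=> nt xC; have [b xbC] : exists b, (x, b) \in C.
  by case/orP: xC => xbC; [exists true | exists false].
rewrite (cardsD1 (x, b)) xbC add1n; congr _.+1; apply: eq_card => l.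
rewrite !inE andbC; apply: andb_id2l => lC; congr negb.
by apply/eqP/eqP => [-> // | lx]; apply: (nontrivial_var_inj nt lC xbC).
Qed.

Lemma lit_val_fix_var c u (l : lit X) :
  l.1 != x -> lit_val l (fix_var x c u) = lit_val l u.
Proof. by move=> lx; rewrite /lit_val /fix_var !ffunE (negPf lx). Qed.

Lemma clause_sat_fix_var c u C :
  clause_sat C (fix_var x c u) = clause_sat (restrict C) u && ((x, ~~ c) \notin C).
Proof.
apply/forallP/andP => [sat_c | [/forallP sat_r xcC] l].
- split.
  + apply/forallP => l; apply/implyP; rewrite inE => /andP [lC lx].
    by move: (sat_c l); rewrite lC lit_val_fix_var.
  + apply/negP => xcC; move: (sat_c (x, ~~ c)).
    by rewrite xcC /lit_val /fix_var ffunE eqxx; case: c {sat_c xcC}.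
- apply/implyP => lC; case: (eqVneq l.1 x) => lx.
  + case: l lC lx => z b lC /= zx; subst z.
    rewrite /lit_val /fix_var ffunE eqxx /=.
    by case: b c lC xcC => [] [] //= ->.
  + by rewrite lit_val_fix_var //; move: (sat_r l); rewrite inE lC lx.
Qed.

(* A non-trivial C contains at most one literal on x, so exactly one of the two
   is absent from C iff C mentions x. *)
Lemma mentions_xor C :
  ~~ trivial_clause C -> ((x, false) \notin C) (+) ((x, true) \notin C) = mentions C.
Proof.
move=> nt; have := nontrivial_opp (z := x) (b := true) nt; rewrite /mentions.
by case: ((x, true) \in C); case: ((x, false) \in C) => //= /(_ isT).
Qed.

Variable D : {set {set lit X}}.
Hypothesis orth : x_orthogonal x D.
Hypothesis nontriv : forall C, C \in D -> ~~ trivial_clause C.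

Lemma restrict_sat_unique u C C' :
  C \in D -> C' \in D -> clause_sat (restrict C) u -> clause_sat (restrict C') u ->
  C = C'.
Proof.
move=> CD C'D /forallP satC /forallP satC'; apply/eqP; apply: contraT => neCC'.
have [eta [etax etaC etaC']] := orth CD C'D neCC'.
move: (satC eta) (satC' (negl eta)); rewrite !inE etaC etaC' /= etax lit_val_negl.
by case: lit_val.
Qed.

Lemma dnf_fix_var_sat u C0 c :
  C0 \in D -> clause_sat (restrict C0) u ->
  dnf D (fix_var x c u) = ((x, ~~ c) \notin C0).
Proof.
move=> C0D satC0; apply/existsP/idP => [[C /andP [CD]] | xcC0].
- rewrite -/(clause_sat C _) clause_sat_fix_var => /andP [satC].
  by rewrite (restrict_sat_unique CD C0D satC satC0).
- by exists C0; rewrite C0D -/(clause_sat C0 _) clause_sat_fix_var satC0.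
Qed.

Lemma dnf_fix_var_unsat u c :
  (forall C, C \in D -> ~~ clause_sat (restrict C) u) -> dnf D (fix_var x c u) = false.
Proof.
move=> unsat; apply/existsP => [[C /andP [CD]]].
by rewrite -/(clause_sat C _) clause_sat_fix_var (negPf (unsat C CD)).
Qed.

Lemma dnf_fix_var_xor u :
  (dnf D (fix_var x true u) (+) dnf D (fix_var x false u) : nat)
  = (\sum_(C in D | mentions C) (clause_sat (restrict C) u : nat))%N.
Proof.
have [C0 /andP [C0D satC0] | unsat] :=
  pickP (fun C => (C \in D) && clause_sat (restrict C) u).
- rewrite !(dnf_fix_var_sat _ C0D satC0) /= mentions_xor ?nontriv //.
  rewrite big_mkcond (bigD1 C0) //= C0D satC0 big1 ?addn0 => [|C neCC0].
    by case: (mentions C0).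
  case: ifP => // /andP [CD _]; case satC: (clause_sat _ u) => //.
  by rewrite (restrict_sat_unique CD C0D satC satC0) eqxx in neCC0.
- have unsatD C : C \in D -> ~~ clause_sat (restrict C) u.
    by move=> CD; move: (unsat C); rewrite /= CD /= => ->.
  rewrite !dnf_fix_var_unsat // big1 // => C /andP [CD _].
  by rewrite (negPf (unsatD C CD)).
Qed.

End Clauses.

(* Taking expectations in the pointwise identity, each clause C mentioning x
   contributes 2^-(|C| - 1) = 2 * 2^-|C|. *)
Theorem mainTheorem9 (X : finType) (D : {set {set lit X}}) (x : X) :
  (forall C, C \in D -> ~~ trivial_clause C) ->
  x_orthogonal x D ->
  influence x (dnf D) = 2%:R * JW x D.
Proof.
move=> nontriv orth.
rewrite /influence (expect_sum (dnf_fix_var_xor orth nontriv)) /JW mulr_sumr.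
apply: eq_bigr => C /andP [CD xC]; have ntC := nontriv C CD.
rewrite expect_clause_sat ?(nontrivial_sub (restrict_sub x C) ntC) //.
by rewrite (card_restrict ntC xC) exprS invfM mulrA mulfV ?mul1r // pnatr_eq0.
Qed.
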